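(* Let $Q$ be a finite quiver, $A=\Bbbk Q/(\geq 2)$, $J$ the ideal of $A$ generated by the loops, $B=A/J$. For each vertex $i$ let $\tilde P_i=Be_i$, let $\tilde I_i$ be the indecomposable injective $B$-module at $i$, and let $S_i$ be the simple module at $i$; regard these as $A$-modules. Then: (1) If $i\neq j$ and $\{\tilde P_i,\tilde P_j\}$ is a brick set in $A$-mod, then $\mathrm{Ext}^1_A(\tilde P_i,\tilde P_j)=0$; and if $\tilde P_i\not\cong S_i$ then $\mathrm{Ext}^1_A(\tilde P_i,\tilde P_i)=0$. (2) If $i\neq j$ and $\{\tilde I_i,\tilde I_j\}$ is a brick set in $A$-mod, then $\mathrm{Ext}^1_A(\tilde I_i,\tilde I_j)=0$; and if $\tilde I_i\not\cong S_i$ then $\mathrm{Ext}^1_A(\tilde I_i,\tilde I_i)=0$. (3) If $i\neq j$ then $\mathrm{Ext}^1_A(\tilde P_i,S_j)=0$. (4) If $i\neq j$ then $\mathrm{Ext}^1_A(S_i,\tilde I_j)=0$.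
   Context: $\Bbbk$ is an algebraically closed field; $\Bbbk Q$ is the path algebra with $e_i\alpha=\delta_{i,t(\alpha)}\alpha$, $\alpha e_j=\delta_{j,s(\alpha)}\alpha$; $(\geq 2)$ is the ideal generated by paths of length $\geq 2$; modules are finite-dimensional left modules, and a $B$-module is regarded as an $A$-module via $A\to B=A/J$. The indecomposable injective $B$-module at $i$ is $\tilde I_i=\mathrm{Hom}_\Bbbk(e_iB,\Bbbk)$. A brick is a module $M$ with $\mathrm{End}(M)=\Bbbk$; a set $\{X_1,\dots,X_k\}$ of nonzero modules is a brick set if each is a brick and $\dim\mathrm{Hom}(X_a,X_b)=\delta_{ab}$. *)

From HB Require Import structures.
From mathcomp Require Import all_boot all_order all_algebra.
Unset Printing Implicit Defensive.
Import GRing.Theory.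
Local Open Scope ring_scope.

Section Quiver.
Variables (F : closedFieldType) (V Arr : finType) (s t : Arr -> V).

(* The standard basis of A = kQ/(>=2): trivial paths e_i (inl i) and
   arrows (inr a). *)
Definition pbasis := (V + Arr)%type.

(* Product of two basis elements of A (None = 0), with the convention
   e_i a = delta_{i,t a} a, a e_j = delta_{j,s a} a, paths of length 2 = 0. *)
Definition mulA (x y : pbasis) : option pbasis :=
  match x, y with
  | inl i, inl j => if i == j then Some (inl i) else None
  | inl i, inr a => if t a == i then Some (inr a) else None
  | inr a, inl j => if s a == j then Some (inr a) else None
  | inr _, inr _ => None
  end.

Definition is_loop (x : pbasis) : bool :=
  if x is inr a then s a == t a else false.

(* Product in B = A/J (J generated by the loops): the non-loop basis
   elements form a basis of B, and loops map to 0. *)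
Definition mulB (x y : pbasis) : option pbasis :=
  if is_loop x || is_loop y then None else mulA x y.

(* A finite-dimensional left A-module: F^n (column vectors) with the
   matrices by which the basis elements of A act. *)
Record amod := AMod { mdim : nat; mact : pbasis -> 'M[F]_mdim }.

Definition optmx n (o : option pbasis) (M : pbasis -> 'M[F]_n) : 'M[F]_n :=
  if o is Some z then M z else 0.

Definition is_amod (M : amod) : Prop :=
  (forall x y, mact M x *m mact M y = optmx (mdim M) (mulA x y) (mact M)) /\
  \sum_(i : V) mact M (inl i) = 1%:M.

Definition is_hom (M N : amod) : 'M[F]_(mdim N, mdim M) -> Prop :=
  fun f => forall x, f *m mact M x = mact N x *m f.

Definition hom_zero (M N : amod) : Prop :=
  forall f, is_hom M N f -> f = 0.

Definition brick (M : amod) : Prop :=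
  (0 < mdim M)%N /\ forall f, is_hom M M f -> exists c : F, f = c%:M.

Definition brick_set (I : finType) (X : I -> amod) : Prop :=
  (forall a, brick (X a)) /\ (forall a b, a != b -> hom_zero (X a) (X b)).

Definition iso (M N : amod) : Prop :=
  exists (f : 'M[F]_(mdim N, mdim M)) (g : 'M[F]_(mdim M, mdim N)),
    [/\ is_hom M N f, is_hom N M g, f *m g = 1%:M & g *m f = 1%:M].

(* Ext^1_A(M, N) = 0, in Yoneda form: every short exact sequence
   0 -> N -i-> E -p-> M -> 0 of A-modules splits. *)
Definition Ext1_zero (M N : amod) : Prop :=
  forall E : amod, is_amod E ->
  forall (i : 'M[F]_(mdim E, mdim N)) (p : 'M[F]_(mdim M, mdim E)),
    is_hom N E i -> is_hom E M p ->
    (forall w : 'cV[F]_(mdim N), i *m w = 0 -> w = 0) ->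
    (forall u : 'cV[F]_(mdim M), exists v, p *m v = u) ->
    p *m i = 0 ->
    (forall v : 'cV[F]_(mdim E), p *m v = 0 -> exists w, v = i *m w) ->
    exists r : 'M[F]_(mdim E, mdim M), is_hom M E r /\ p *m r = 1%:M.

Definition fmx (T : finType) (f : T -> T -> F) : 'M[F]_#|{: T}| :=
  \matrix_(r, c) f (enum_val r) (enum_val c).

(* basis of P~_i = B e_i : non-loop basis elements b with b e_i = b *)
Definition PT (i : V) := {x : pbasis | ~~ is_loop x && (mulB x (inl i) == Some x)}.
(* basis of e_i B : non-loop basis elements b with e_i b = b *)
Definition IT (i : V) := {x : pbasis | ~~ is_loop x && (mulB (inl i) x == Some x)}.

(* P~_i = B e_i: x . c = x c in B *)
Definition Ptil (i : V) : amod :=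
  @AMod #|{: PT i}| (fun x =>
    fmx (PT i) (fun r c : PT i => ((mulB x (val c) == Some (val r)) : nat)%:R)).

(* I~_i = Hom_k(e_i B, k), dual basis c^*: (x . c^* )(r) = c^*(r x) *)
Definition Itil (i : V) : amod :=
  @AMod #|{: IT i}| (fun x =>
    fmx (IT i) (fun r c : IT i => ((mulB (val r) x == Some (val c)) : nat)%:R)).

Definition Simple (i : V) : amod :=
  @AMod 1 (fun x => ((x == inl i) : nat)%:R%:M).

End Quiver.

Arguments mdim {F V Arr}.
Arguments mact {F V Arr}.
Arguments is_amod {F V Arr} s t M.
Arguments is_hom {F V Arr} M N.
Arguments hom_zero {F V Arr} M N.
Arguments brick {F V Arr} M.
Arguments brick_set {F V Arr I} X.
Arguments iso {F V Arr} M N.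
Arguments Ext1_zero {F V Arr} s t M N.
Arguments Ptil F {V Arr} s t i.
Arguments Itil F {V Arr} s t i.
Arguments Simple F {V Arr} i.

(* B-modules are the A-modules killed by the loops. The point is that P~_i = B e_i
   is projective relative to the A-modules on which the loops at i act as zero,
   and dually I~_j is injective relative to those on which the loops at j vanish.
   So it suffices to show that the loops at the relevant vertex kill the middle
   term E of the extension. A loop l at i factors as l = e_i l = l e_i; when e_i
   kills the submodule (projective case) or the quotient (injective case), which
   is what the brick-set hypothesis, resp. i <> j for simple modules, provides,
   the loop kills E. When P~_i is not simple there is a non-loop arrow a out of i,
   and a l = 0 together with the injectivity of P~_i -> E again forces l E = 0;
   dually for I~_i with a non-loop arrow into i. *)

From Pilot Require Import Defs.
From HB Require Import structures.
From mathcomp Require Import all_boot all_order all_algebra.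
Set Implicit Arguments. Unset Strict Implicit. Unset Printing Implicit Defensive.
Import GRing.Theory.
Local Open Scope ring_scope.

Section Matrices.
Variable R : nzRingType.

Lemma mx_rinv_of_surj m n (p : 'M[R]_(m, n)) :
  (forall u : 'cV[R]_m, exists v, p *m v = u) -> exists S, p *m S = 1%:M.
Proof.
move=> surj.
have col_pre (b : 'I_m) : exists v : 'cV[R]_n, p *m v == delta_mx b 0.
  by have [v pv] := surj (delta_mx b 0); exists v; apply/eqP.
exists (\matrix_(a, b) (xchoose (col_pre b)) a 0); apply/matrixP => a b.
have /eqP/matrixP/(_ a 0) := xchooseP (col_pre b).
by rewrite !mxE eqxx andbT => <-; apply: eq_bigr => k _; rewrite mxE.
Qed.

Lemma mx_factor_ker m n k l (p : 'M[R]_(m, n)) (i : 'M[R]_(n, k)) (X : 'M[R]_(n, l)) :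
  (forall v : 'cV[R]_n, p *m v = 0 -> exists w : 'cV[R]_k, v = i *m w) ->
  p *m X = 0 -> exists W, X = i *m W.
Proof.
move=> ker_p pX.
have col_pre (b : 'I_l) : exists w : 'cV[R]_k, col b X == i *m w.
  have [|w ->] := ker_p (col b X); last by exists w.
  by rewrite colE mulmxA pX mul0mx.
exists (\matrix_(a, b) (xchoose (col_pre b)) a 0); apply/matrixP => a b.
have /eqP/matrixP/(_ a 0) := xchooseP (col_pre b).
by rewrite !mxE => ->; apply: eq_bigr => j _; rewrite !mxE.
Qed.

Lemma mx_inj_cancel m n l (A : 'M[R]_(m, n)) (X : 'M[R]_(n, l)) :
  (forall w : 'cV[R]_n, A *m w = 0 -> w = 0) -> A *m X = 0 -> X = 0.
Proof.
move=> injA AX; apply/matrixP => a b.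
have /matrixP/(_ a 0) : col b X = 0 by apply: injA; rewrite colE mulmxA AX mul0mx.
by rewrite !mxE.
Qed.

Definition bv (T : finType) (c : T) : 'cV[R]_#|{: T}| := delta_mx (enum_rank c) 0.
Definition br (T : finType) (c : T) : 'rV[R]_#|{: T}| := delta_mx 0 (enum_rank c).

Lemma br_bv (T : finType) (r c : T) : br r *m bv c = ((r == c) : nat)%:R%:M.
Proof.
rewrite /br /bv mul_delta_mx_cond (inj_eq enum_rank_inj).
by case: (r == c); apply/matrixP => a b; rewrite !ord1 !mxE.
Qed.

Lemma eq_mx_bv (T : finType) m (A B : 'M[R]_(m, #|{: T}|)) :
  (forall c : T, A *m bv c = B *m bv c) -> A = B.
Proof.
move=> eqAB; apply/matrixP => k l; have /matrixP/(_ k 0) := eqAB (enum_val l).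
by rewrite /bv -!colE !mxE enum_valK.
Qed.

Lemma eq_mx_br (T : finType) m (A B : 'M[R]_(#|{: T}|, m)) :
  (forall c : T, br c *m A = br c *m B) -> A = B.
Proof.
move=> eqAB; apply/matrixP => k l; have /matrixP/(_ 0 l) := eqAB (enum_val k).
by rewrite /br -!rowE !mxE enum_valK.
Qed.

Lemma bv_neq0 (T : finType) (c : T) : bv c != 0.
Proof.
apply/negP => /eqP/matrixP/(_ (enum_rank c) 0).
by rewrite !mxE !eqxx => /eqP; rewrite oner_eq0.
Qed.

Lemma bv_mul_eq0 (T : finType) (c : T) n (K : 'M[R]_(1, n)) : bv c *m K = 0 -> K = 0.
Proof.
move=> /(congr1 (mulmx (br c))); rewrite mulmxA br_bv eqxx mul1mx mulmx0.
by [].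
Qed.

Lemma sum_indicator_one (T : finType) m n (g : T -> 'M[R]_(m, n)) (b : pred T) k :
  (forall r, b r = (r == k)) -> \sum_(r : T) (b r : nat)%:R *: g r = g k.
Proof.
move=> bE; rewrite (bigD1 k) //= bE eqxx scale1r big1 ?addr0 // => r rk.
by rewrite bE (negbTE rk) scale0r.
Qed.

Lemma sum_indicator_zero (T : finType) m n (g : T -> 'M[R]_(m, n)) (b : pred T) :
  (forall r, b r = false) -> \sum_(r : T) (b r : nat)%:R *: g r = 0.
Proof. by move=> bE; rewrite big1 // => r _; rewrite bE scale0r. Qed.

End Matrices.

Section Extensions.
Variables (F : closedFieldType) (V Arr : finType) (s t : Arr -> V).
Local Notation amod := (amod F V Arr).
Local Notation mulA := (@Defs.mulA V Arr s t).

(* A linear section [S] of [p] is corrected by the A-linear projection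
   [1 - i q]: the defect [S x - x S] lands in the image of [i], which it kills. *)
Lemma split_of_retraction (M N E : amod) (i : 'M[F]_(mdim E, mdim N))
    (p : 'M[F]_(mdim M, mdim E)) (q : 'M[F]_(mdim N, mdim E)) :
  is_hom N E i -> is_hom E M p -> is_hom E N q -> q *m i = 1%:M ->
  (forall u : 'cV[F]_(mdim M), exists v, p *m v = u) ->
  p *m i = 0 ->
  (forall v : 'cV[F]_(mdim E), p *m v = 0 -> exists w, v = i *m w) ->
  exists r : 'M[F]_(mdim E, mdim M), is_hom M E r /\ p *m r = 1%:M.
Proof.
move=> hi hp hq qi surj pi ker_p.
have [S pS] := mx_rinv_of_surj surj.
set e := 1%:M - i *m q.
have ei : e *m i = 0 by rewrite mulmxBl mul1mx -mulmxA qi mulmx1 subrr.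
have e_hom x : e *m mact E x = mact E x *m e.
  by rewrite mulmxBl mulmxBr mul1mx mulmx1 -!mulmxA hq !mulmxA hi.
exists (e *m S); split; last by rewrite mulmxA mulmxBr mulmx1 mulmxA pi mul0mx subr0.
move=> x; set D := S *m mact M x - mact E x *m S.
have [W DW] : exists W, D = i *m W.
  apply: mx_factor_ker ker_p _.
  by rewrite mulmxBr !mulmxA pS mul1mx hp -mulmxA pS mulmx1 subrr.
rewrite -mulmxA (_ : S *m mact M x = D + mact E x *m S); last by rewrite subrK.
by rewrite mulmxDr DW mulmxA ei mul0mx add0r mulmxA e_hom mulmxA.
Qed.

(* [z] maps [E] into the image of [N], which [y] kills. *)
Lemma act_eq0_ext (M N E : amod) (i : 'M[F]_(mdim E, mdim N))
    (p : 'M[F]_(mdim M, mdim E)) x y z :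
  is_amod s t E -> is_hom N E i -> is_hom E M p ->
  (forall v : 'cV[F]_(mdim E), p *m v = 0 -> exists w, v = i *m w) ->
  mulA y z = Some x -> mact M z = 0 -> mact N y = 0 -> mact E x = 0.
Proof.
move=> [mulE _] hi hp ker_p yz Mz Ny.
have [W EzW] : exists W, mact E z = i *m W.
  by apply: mx_factor_ker ker_p _; rewrite hp Mz mul0mx.
have -> : mact E x = mact E y *m mact E z by rewrite mulE yz.
by rewrite EzW mulmxA -hi Ny mulmx0 mul0mx.
Qed.

End Extensions.

Section MultiplicationTable.
Variables (V Arr : finType) (s t : Arr -> V).
Local Notation mulA := (@Defs.mulA V Arr s t).
Local Notation mulB := (@Defs.mulB V Arr s t).
Local Notation is_loop := (@Defs.is_loop V Arr s t).
Local Notation pbasis := (pbasis V Arr).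

Definition in_PT i (z : pbasis) := ~~ is_loop z && (mulB z (inl i) == Some z).
Definition in_IT j (z : pbasis) := ~~ is_loop z && (mulB (inl j) z == Some z).

Ltac table := rewrite /in_PT /in_IT /Defs.mulB /Defs.mulA /Defs.is_loop;
  repeat first
  [ progress intros
  | progress subst
  | match goal with
    | H : is_true (_ == _) |- _ => move/eqP: H => ?
    | H : is_true (~~ (_ == _)) |- _ => move/eqP: H => ?
    | H : Some _ = Some _ |- _ => case: H => ?
    | H : Some _ = None |- _ => discriminate H
    | H : None = Some _ |- _ => discriminate H
    | H : inl _ = inr _ |- _ => discriminate H
    | H : inr _ = inl _ |- _ => discriminate H
    | H : inl _ = inl _ |- _ => case: H => ?
    | H : inr _ = inr _ |- _ => case: H => ?
    | H : context [?x1 == ?x2] |- _ => case: (@eqP _ x1 x2) H => ? ?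
    | |- context [?x1 == ?x2] => case: (@eqP _ x1 x2) => ?
    | H : ?x1 <> ?x1 |- _ => by case: H
    | |- is_true true => exact isT
    | |- ?x1 = ?x1 => reflexivity
    | H : ?x1 <> ?x2, H' : ?x1 = ?x2 |- _ => by case: H
    | H : ?x1 <> ?x2, H' : ?x2 = ?x1 |- _ => by case: H
    | H : is_true false |- _ => discriminate H
    | H : is_true (_ && _) |- _ => case/andP: H => ? ?
    end
  | progress (simpl in * |- * ) ].

Lemma in_PT_unit i : in_PT i (inl i). Proof. by table. Qed.
Lemma in_IT_unit j : in_IT j (inl j). Proof. by table. Qed.

Lemma in_PT_arrow i a : s a = i -> s a != t a -> in_PT i (inr a).
Proof. by table. Qed.

Lemma in_IT_arrow j a : t a = j -> s a != t a -> in_IT j (inr a).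
Proof. by table. Qed.

Lemma mulA_unit_arrow k l : t l = k -> mulA (inl k) (inr l) = Some (inr l).
Proof. by table. Qed.

Lemma mulA_arrow_unit k l : s l = k -> mulA (inr l) (inl k) = Some (inr l).
Proof. by table. Qed.

Lemma mulB_loopl x c : is_loop x -> mulB x c = None.
Proof. by rewrite /Defs.mulB => ->. Qed.

Lemma mulB_loopr x c : is_loop c -> mulB x c = None.
Proof. by rewrite /Defs.mulB orbC => ->. Qed.

Lemma mul_PT_cases i (c x : pbasis) : in_PT i c ->
  (exists z, [/\ mulB x c = Some z, mulA x c = Some z & in_PT i z]) \/
  (mulB x c = None /\ (mulA x c = None \/
     exists l, [/\ x = inr l, mulA x c = Some (inr l), s l = i & t l = i])).
Proof.
case: c => [j|a]; case: x => [k|l]; table.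
all: try first [ by left; eexists; split; [reflexivity|reflexivity|table]
               | by right; split; [reflexivity| first [by left | by right; eexists; split]]].
Qed.

Lemma mul_IT_cases j (c x : pbasis) : in_IT j c ->
  (exists z, [/\ mulB c x = Some z, mulA c x = Some z & in_IT j z]) \/
  (mulB c x = None /\ (mulA c x = None \/
     exists l, [/\ x = inr l, mulA c x = Some (inr l), s l = j & t l = j])).
Proof.
case: c => [i|a]; case: x => [k|l]; table.
all: try first [ by left; eexists; split; [reflexivity|reflexivity|table]
               | by right; split; [reflexivity| first [by left | by right; eexists; split]]].
Qed.

Lemma mulB_unit_PT i c : in_PT i c -> c != inl i -> mulB (inl i) c = None.
Proof. by case: c => [k|a]; table. Qed.

Lemma mulB_IT i r c : in_IT i r -> in_IT i c -> r != inl i -> mulB r c = None.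
Proof. by case: c => [k|a]; case: r => [k'|b]; table. Qed.

Lemma mulB_unit_PT_Some i j c z : i != j -> in_PT j c -> mulB (inl i) c = Some z ->
  exists a, [/\ c = inr a, z = inr a, s a = j, t a = i & s a != t a].
Proof. by move=> /eqP ij; case: c => [k|a]; table; eexists; split; table. Qed.

Lemma mulB_IT_unit_Some i j r z : i != j -> in_IT i r -> mulB r (inl j) = Some z ->
  exists a, [/\ r = inr a, z = inr a, s a = j, t a = i & s a != t a].
Proof. by move=> /eqP ij; case: r => [k|a]; table; eexists; split; table. Qed.

Lemma mulB_PT_eq_unit i x r :
  in_PT i r -> (mulB x r == Some (inl i)) = (x == inl i) && (r == inl i).
Proof. by case: x => [k|b]; case: r => [k'|a]; table. Qed.

Lemma mulB_IT_eq_unit j x r :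
  in_IT j r -> (mulB r x == Some (inl j)) = (x == inl j) && (r == inl j).
Proof. by case: x => [k|b]; case: r => [k'|a]; table. Qed.

Lemma mulB_arrowr i x a : t a = i -> s a != t a ->
  mulB x (inr a) = if x == inl i then Some (inr a) else None.
Proof. by case: x => [k|b]; table. Qed.

Lemma mulB_arrowl j x a : s a = j -> s a != t a ->
  mulB (inr a) x = if x == inl j then Some (inr a) else None.
Proof. by case: x => [k|b]; table. Qed.

Lemma mulB_IT_arrow j a r : t a = j -> s a != t a -> in_IT j r ->
  (mulB r (inr a) == Some (inr a)) = (r == inl j).
Proof. by case: r => [k|b]; table. Qed.

Lemma in_PT_no_arrow i c :
  (forall a, s a <> t a -> s a <> i) -> in_PT i c -> c = inl i.
Proof. by move=> no_arrow; case: c => [k|a]; table; case: (no_arrow a). Qed.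

Lemma in_IT_no_arrow j c :
  (forall a, s a <> t a -> t a <> j) -> in_IT j c -> c = inl j.
Proof. by move=> no_arrow; case: c => [k|a]; table; case: (no_arrow a). Qed.

Lemma mulB_eq_unitr x i : (mulB x (inl i) == Some (inl i)) = (x == inl i).
Proof. by case: x => [k|b]; table. Qed.

Lemma mulB_eq_unitl x i : (mulB (inl i) x == Some (inl i)) = (x == inl i).
Proof. by case: x => [k|b]; table. Qed.

End MultiplicationTable.

Section BasisModules.
Variables (F : closedFieldType) (V Arr : finType) (s t : Arr -> V).
Local Notation amod := (amod F V Arr).
Local Notation mulB := (@Defs.mulB V Arr s t).
Local Notation PT i := (PT V Arr s t i).
Local Notation IT i := (IT V Arr s t i).
Local Notation P i := (Ptil F s t i).
Local Notation I i := (Itil F s t i).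
Local Notation S i := (@Simple F V Arr i).
Local Notation bv := (@bv F _).
Local Notation br := (@br F _).

Lemma fmx_mulbv (T : finType) (f : T -> T -> F) (c : T) :
  @fmx F T f *m bv c = \sum_(r : T) f r c *: bv r.
Proof.
apply/matrixP => k l; rewrite /bv -colE !mxE summxE (bigD1 (enum_val k)) //=.
rewrite big1 ?addr0 => [|r rk]; last first.
  rewrite !mxE; case: (eqVneq k (enum_rank r)) => [kr|]; last by rewrite mulr0.
  by move: rk; rewrite kr enum_rankK eqxx.
by rewrite !mxE enum_valK eqxx ord1 eqxx mulr1 enum_rankK.
Qed.

Lemma fmx_brmul (T : finType) (f : T -> T -> F) (c : T) :
  br c *m @fmx F T f = \sum_(r : T) f c r *: br r.
Proof.
apply/matrixP => k l; rewrite /br -rowE !mxE summxE (bigD1 (enum_val l)) //=.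
rewrite big1 ?addr0 => [|r rl]; last first.
  rewrite !mxE; case: (eqVneq l (enum_rank r)) => [lr|]; last by rewrite andbF mulr0.
  by move: rl; rewrite lr enum_rankK eqxx.
by rewrite !mxE enum_valK eqxx ord1 eqxx mulr1 enum_rankK.
Qed.

Lemma Ptil_act_Some i x (c z : PT i) :
  mulB x (val c) = Some (val z) -> mact (P i) x *m bv c = bv z.
Proof.
move=> xc; rewrite fmx_mulbv xc; apply: sum_indicator_one => r.
by rewrite (inj_eq Some_inj) val_eqE eq_sym.
Qed.

Lemma Ptil_act_None i x (c : PT i) : mulB x (val c) = None -> mact (P i) x *m bv c = 0.
Proof. by move=> xc; rewrite fmx_mulbv xc; apply: sum_indicator_zero. Qed.

Lemma Itil_act_Some i x (c z : IT i) :
  mulB (val c) x = Some (val z) -> br c *m mact (I i) x = br z.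
Proof.
move=> cx; rewrite fmx_brmul cx; apply: sum_indicator_one => r.
by rewrite (inj_eq Some_inj) val_eqE eq_sym.
Qed.

Lemma Itil_act_None i x (c : IT i) : mulB (val c) x = None -> br c *m mact (I i) x = 0.
Proof. by move=> cx; rewrite fmx_brmul cx; apply: sum_indicator_zero. Qed.

Lemma Ptil_loop i l : s l = t l -> mact (P i) (inr l) = 0.
Proof.
move=> loop_l; apply: eq_mx_bv => c; rewrite mul0mx Ptil_act_None //.
by apply: mulB_loopl; rewrite /= loop_l eqxx.
Qed.

Lemma Itil_loop i l : s l = t l -> mact (I i) (inr l) = 0.
Proof.
move=> loop_l; apply: eq_mx_br => c; rewrite mulmx0 Itil_act_None //.
by apply: mulB_loopr; rewrite /= loop_l eqxx.
Qed.

Lemma Simple_unit (i j : V) : i != j -> mact (S j) (inl i) = 0.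
Proof.
move=> ij; rewrite /= (inj_eq (@inl_inj _ _)) (negbTE ij).
by apply/matrixP => a b; rewrite !mxE mul0rn.
Qed.

Definition PT_unit i : PT i := exist _ (inl i) (in_PT_unit s t i).
Definition IT_unit j : IT j := exist _ (inl j) (in_IT_unit s t j).

Lemma Ptil_unit i : mact (P i) (inl i) = bv (PT_unit i) *m br (PT_unit i).
Proof.
apply: eq_mx_bv => c; rewrite -mulmxA br_bv mul_mx_scalar.
case: (eqVneq (PT_unit i) c) => [<-|ec].
  by rewrite scale1r (Ptil_act_Some (z := PT_unit i)) //= /Defs.mulB /= eqxx.
rewrite scale0r Ptil_act_None // (mulB_unit_PT (valP c)) //.
by apply: contra_neq ec => ce; apply: val_inj.
Qed.

Lemma Itil_IT j (c : IT j) : mact (I j) (val c) = bv (IT_unit j) *m br c.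
Proof.
apply: eq_mx_br => r; rewrite mulmxA br_bv mul_scalar_mx.
case: (eqVneq r (IT_unit j)) => [->|re].
  by rewrite scale1r (Itil_act_Some (z := c)) //; case/andP: (valP c) => _ /eqP.
rewrite scale0r Itil_act_None //; apply: (mulB_IT (valP r) (valP c)).
by apply: contra_neq re => re; apply: val_inj.
Qed.

Lemma Itil_unit j : mact (I j) (inl j) = bv (IT_unit j) *m br (IT_unit j).
Proof. exact: (Itil_IT (IT_unit j)). Qed.

Lemma br_Ptil_unit i x :
  br (PT_unit i) *m mact (P i) x = ((x == inl i) : nat)%:R *: br (PT_unit i).
Proof.
rewrite fmx_brmul; case: (eqVneq x (inl i)) => [->|xi].
  by rewrite scale1r; apply: sum_indicator_one => r; rewrite (mulB_PT_eq_unit _ (valP r)) eqxx.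
rewrite scale0r; apply: sum_indicator_zero => r.
by rewrite (mulB_PT_eq_unit _ (valP r)) (negbTE xi).
Qed.

Lemma Itil_bv_unit j x :
  mact (I j) x *m bv (IT_unit j) = ((x == inl j) : nat)%:R *: bv (IT_unit j).
Proof.
rewrite fmx_mulbv; case: (eqVneq x (inl j)) => [->|xj].
  by rewrite scale1r; apply: sum_indicator_one => r; rewrite (mulB_IT_eq_unit _ (valP r)) eqxx.
rewrite scale0r; apply: sum_indicator_zero => r.
by rewrite (mulB_IT_eq_unit _ (valP r)) (negbTE xj).
Qed.

(* The section sends the basis vector [c] to [c v0], where [v0 = e_i v0] lifts
   [e_i]; the only products [x c] vanishing in B but not in A are [l e_i] for
   loops [l] at [i]. *)
Lemma Ptil_split i (E : amod) (p : 'M[F]_(mdim (P i), mdim E)) :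
  is_amod s t E -> is_hom E (P i) p ->
  (forall u : 'cV[F]_(mdim (P i)), exists v, p *m v = u) ->
  (forall l, s l = i -> t l = i -> mact E (inr l) = 0) ->
  exists r : 'M[F]_(mdim E, mdim (P i)), is_hom (P i) E r /\ p *m r = 1%:M.
Proof.
move=> [mulE _] hp surj loops0.
have [v pv] := surj (bv (PT_unit i)).
set v0 := mact E (inl i) *m v.
have pv0 : p *m v0 = bv (PT_unit i).
  by rewrite mulmxA hp -mulmxA pv Ptil_unit -mulmxA br_bv eqxx mul_mx_scalar scale1r.
pose r := \matrix_(k < mdim E, c < #|{: PT i}|) (mact E (val (enum_val c)) *m v0) k 0.
have r_bv (c : PT i) : r *m bv c = mact E (val c) *m v0.
  by apply/matrixP => k l; rewrite /bv -colE (ord1 l) !mxE enum_rankK.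
exists r; split.
  move=> x; apply: eq_mx_bv => c; rewrite -!mulmxA r_bv [RHS]mulmxA mulE.
  case: (mul_PT_cases x (valP c)) => [[z [Bz Az Pz]] | [Bz [Az | [l [_ Az li tl]]]]].
  - by rewrite (Ptil_act_Some (z := exist _ z Pz) Bz) r_bv Az.
  - by rewrite (Ptil_act_None Bz) mulmx0 Az /= mul0mx.
  - by rewrite (Ptil_act_None Bz) mulmx0 Az /= loops0 // mul0mx.
apply: eq_mx_bv => c; rewrite -mulmxA r_bv mulmxA hp -mulmxA pv0 mul1mx.
by rewrite (Ptil_act_Some (z := c)) //; case/andP: (valP c) => _ /eqP.
Qed.

(* The retraction sends [m] to the functional [c |-> phi (c m)], where [phi] is a
   linear form taking the value 1 on the image of [e_j^*]. *)
Lemma Itil_retraction j (E : amod) (ii : 'M[F]_(mdim E, mdim (I j))) :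
  is_amod s t E -> is_hom (I j) E ii ->
  (forall w : 'cV[F]_(mdim (I j)), ii *m w = 0 -> w = 0) ->
  (forall l, s l = j -> t l = j -> mact E (inr l) = 0) ->
  exists q : 'M[F]_(mdim (I j), mdim E), is_hom E (I j) q /\ q *m ii = 1%:M.
Proof.
move=> [mulE _] hi inj loops0.
have [u def_u] : {u | u = ii *m bv (IT_unit j)} by exists (ii *m bv (IT_unit j)).
have [k uk] : exists k, u k 0 != 0.
  apply/existsP; apply: contraR (bv_neq0 F (IT_unit j)).
  rewrite negb_exists => /forallP u0; apply/eqP/inj; rewrite -def_u.
  by apply/matrixP => a b; rewrite (ord1 b) [RHS]mxE; apply/eqP/negbNE/u0.
pose phi := (u k 0)^-1 *: (delta_mx 0 k : 'rV[F]_(mdim E)).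
have phi_u : phi *m u = 1%:M.
  apply/matrixP => a b; rewrite (ord1 a) (ord1 b) /phi -scalemxAl -rowE !mxE.
  by rewrite mulVf // eqxx.
pose q := \matrix_(c < #|{: IT j}|, m < mdim E) (phi *m mact E (val (enum_val c))) 0 m.
have br_q (c : IT j) : br c *m q = phi *m mact E (val c).
  by apply/matrixP => a b; rewrite /br -rowE (ord1 a) !mxE enum_rankK.
exists q; split.
  move=> x; apply: eq_mx_br => c; rewrite !mulmxA br_q -(mulmxA phi) mulE.
  case: (mul_IT_cases x (valP c)) => [[z [Bz Az Iz]] | [Bz [Az | [l [_ Az lj tl]]]]].
  - by rewrite (Itil_act_Some (z := exist _ z Iz) Bz) br_q Az.
  - by rewrite (Itil_act_None Bz) mul0mx Az /= mulmx0.
  - by rewrite (Itil_act_None Bz) mul0mx Az /= loops0 // mulmx0.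
apply: eq_mx_br => c; rewrite mulmxA br_q -mulmxA -hi Itil_IT !mulmxA -(mulmxA phi).
by rewrite -def_u phi_u mul1mx mulmx1.
Qed.

(* A non-zero [e_i] on [P~_j] comes from an arrow [j -> i], which yields a
   non-zero homomorphism [P~_i -> P~_j]. *)
Lemma Ptil_unit_eq0 i j : i != j -> hom_zero (P i) (P j) -> mact (P j) (inl i) = 0.
Proof.
move=> ij hom0; apply: eq_mx_bv => c; rewrite mul0mx.
case ic: (mulB (inl i) (val c)) => [z|]; last exact: Ptil_act_None.
have [a [ca za ja ai aa]] := mulB_unit_PT_Some ij (valP c) ic.
pose f := bv c *m br (PT_unit i).
have act_c x : mact (P j) x *m bv c = ((x == inl i) : nat)%:R *: bv c.
  case: (eqVneq x (inl i)) => [->|xi].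
    by rewrite scale1r (Ptil_act_Some (z := c)) // ic za ca.
  by rewrite scale0r Ptil_act_None // ca (mulB_arrowr x ai aa) (negbTE xi).
have hom_f : is_hom (P i) (P j) f.
  by move=> x; rewrite /f -mulmxA br_Ptil_unit mulmxA act_c -scalemxAr scalemxAl.
have /matrixP/(_ (enum_rank c) (enum_rank (PT_unit i))) := hom0 f hom_f.
by rewrite /f /bv /br mul_delta_mx !mxE !eqxx => /eqP; rewrite oner_eq0.
Qed.

Lemma Itil_unit_eq0 i j : i != j -> hom_zero (I i) (I j) -> mact (I i) (inl j) = 0.
Proof.
move=> ij hom0; apply: eq_mx_br => r; rewrite mulmx0.
case rj: (mulB (val r) (inl j)) => [z|]; last exact: Itil_act_None.
have [a [ra za ja ia aa]] := mulB_IT_unit_Some ij (valP r) rj.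
pose f := bv (IT_unit j) *m br r.
have br_r x : br r *m mact (I i) x = ((x == inl j) : nat)%:R *: br r.
  case: (eqVneq x (inl j)) => [->|xj].
    by rewrite scale1r (Itil_act_Some (z := r)) // rj za ra.
  by rewrite scale0r Itil_act_None // ra (mulB_arrowl x ja aa) (negbTE xj).
have hom_f : is_hom (I i) (I j) f.
  by move=> x; rewrite /f -mulmxA br_r mulmxA Itil_bv_unit -scalemxAr scalemxAl.
have /matrixP/(_ (enum_rank (IT_unit j)) (enum_rank r)) := hom0 f hom_f.
by rewrite /f /bv /br mul_delta_mx !mxE !eqxx => /eqP; rewrite oner_eq0.
Qed.

Lemma Ptil_iso_Simple i : (forall a, s a <> t a -> s a <> i) -> iso (P i) (S i).
Proof.
move=> no_arrow.
have PT_eq (c : PT i) : c = PT_unit i by apply: val_inj; apply: in_PT_no_arrow (valP c).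
exists (br (PT_unit i)), (bv (PT_unit i)); split.
- by move=> x; rewrite br_Ptil_unit /= mul_scalar_mx.
- move=> x; rewrite /= mul_mx_scalar; case: (eqVneq x (inl i)) => [->|xi].
    by rewrite scale1r (Ptil_act_Some (z := PT_unit i)) //= /Defs.mulB /= eqxx.
  rewrite scale0r fmx_mulbv; apply/esym/sum_indicator_zero => r.
  by rewrite (PT_eq r) mulB_eq_unitr (negbTE xi).
- by rewrite br_bv eqxx /= mulr1n.
- apply: eq_mx_bv => c; rewrite -mulmxA br_bv mul1mx (PT_eq c) eqxx /= mulr1n.
  exact: mulmx1.
Qed.

Lemma Itil_iso_Simple i : (forall a, s a <> t a -> t a <> i) -> iso (I i) (S i).
Proof.
move=> no_arrow.
have IT_eq (c : IT i) : c = IT_unit i by apply: val_inj; apply: in_IT_no_arrow (valP c).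
exists (br (IT_unit i)), (bv (IT_unit i)); split.
- move=> x; rewrite /= mul_scalar_mx; case: (eqVneq x (inl i)) => [->|xi].
    by rewrite scale1r (Itil_act_Some (z := IT_unit i)) //= /Defs.mulB /= eqxx.
  rewrite scale0r fmx_brmul; apply: sum_indicator_zero => r.
  by rewrite (IT_eq r) mulB_eq_unitl (negbTE xi).
- by move=> x; rewrite Itil_bv_unit /= mul_mx_scalar.
- by rewrite br_bv eqxx /= mulr1n.
- apply: eq_mx_bv => c; rewrite -mulmxA br_bv mul1mx (IT_eq c) eqxx /= mulr1n.
  exact: mulmx1.
Qed.

Lemma Ptil_nonsimple_arrow i : ~ iso (P i) (S i) -> exists2 a, s a = i & s a != t a.
Proof.
move=> not_iso.
case: (pickP [pred a | (s a == i) && (s a != t a)]) => [a /andP[/eqP ai aa] | none].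
  by exists a.
case: not_iso; apply: Ptil_iso_Simple => a aa ai.
by move: (none a); rewrite /= ai eqxx => /negbFE/eqP ti; apply: aa; rewrite ai.
Qed.

Lemma Itil_nonsimple_arrow i : ~ iso (I i) (S i) -> exists2 a, t a = i & s a != t a.
Proof.
move=> not_iso.
case: (pickP [pred a | (t a == i) && (s a != t a)]) => [a /andP[/eqP ai aa] | none].
  by exists a.
case: not_iso; apply: Itil_iso_Simple => a aa ai.
by move: (none a); rewrite /= ai eqxx => /negbFE/eqP si; apply: aa; rewrite ai.
Qed.


(* The loop [l] factors through [P~_i] as a multiple of [e_i]; composing with the
   non-loop arrow [a] gives [a l = 0] in A, which the injection detects. *)
Lemma Ptil_ext_loop_eq0 i (E : amod) (ii : 'M[F]_(mdim E, mdim (P i)))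
    (p : 'M[F]_(mdim (P i), mdim E)) a :
  is_amod s t E -> is_hom (P i) E ii -> is_hom E (P i) p ->
  (forall w : 'cV[F]_(mdim (P i)), ii *m w = 0 -> w = 0) ->
  (forall v : 'cV[F]_(mdim E), p *m v = 0 -> exists w, v = ii *m w) ->
  s a = i -> s a != t a ->
  forall l, s l = i -> t l = i -> mact E (inr l) = 0.
Proof.
move=> [mulE _] hi hp inj ker_p ai aa l li tl.
have [W lW] : exists W, mact E (inr l) = ii *m W.
  by apply: mx_factor_ker ker_p _; rewrite hp Ptil_loop ?mul0mx // li.
have el : mact E (inl i) *m mact E (inr l) = mact E (inr l) by rewrite mulE mulA_unit_arrow.
have lK : mact E (inr l) = ii *m bv (PT_unit i) *m (br (PT_unit i) *m W).
  by rewrite -el lW mulmxA -hi Ptil_unit !mulmxA.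
pose ca : PT i := exist _ (inr a) (in_PT_arrow ai aa).
have a_e : mact (P i) (inr a) *m bv (PT_unit i) = bv ca.
  by apply: Ptil_act_Some; case/andP: (valP ca) => _ /eqP.
have aK : ii *m (bv ca *m (br (PT_unit i) *m W)) = 0.
  have al : mact E (inr a) *m mact E (inr l) = 0 by rewrite mulE.
  by rewrite -al lK !mulmxA -hi -(mulmxA ii (mact (P i) (inr a))) a_e.
have K0 : br (PT_unit i) *m W = 0 by apply: (@bv_mul_eq0 _ _ ca); apply: mx_inj_cancel aK.
by rewrite lK K0 mulmx0.
Qed.

(* Dually, [e_j] agrees with [a y e_j^* p] modulo the image of the injection,
   where [p y = a^*]; then [l = l e_j] and [l a = 0] kill the loop. *)
Lemma Itil_ext_loop_eq0 j (E : amod) (ii : 'M[F]_(mdim E, mdim (I j)))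
    (p : 'M[F]_(mdim (I j), mdim E)) a :
  is_amod s t E -> is_hom (I j) E ii -> is_hom E (I j) p ->
  (forall u : 'cV[F]_(mdim (I j)), exists v, p *m v = u) ->
  (forall v : 'cV[F]_(mdim E), p *m v = 0 -> exists w, v = ii *m w) ->
  t a = j -> s a != t a ->
  forall l, s l = j -> t l = j -> mact E (inr l) = 0.
Proof.
move=> [mulE _] hi hp surj ker_p aj aa l lj tl.
pose ca : IT j := exist _ (inr a) (in_IT_arrow aj aa).
have [y py] := surj (bv ca).
have pY : p *m mact E (inr a) *m y = bv (IT_unit j).
  rewrite hp -mulmxA py fmx_mulbv; apply: sum_indicator_one => r.
  by rewrite /= (mulB_IT_arrow aj aa (valP r)) -val_eqE.
have [W eW] : exists W,
    mact E (inl j) - mact E (inr a) *m y *m (br (IT_unit j) *m p) = ii *m W.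
  by apply: mx_factor_ker ker_p _; rewrite mulmxBr hp Itil_unit !mulmxA pY subrr.
have el : mact E (inr l) *m mact E (inl j) = mact E (inr l) by rewrite mulE mulA_arrow_unit.
have la : mact E (inr l) *m mact E (inr a) = 0 by rewrite mulE.
rewrite -el (_ : mact E (inl j) = ii *m W + mact E (inr a) *m y *m (br (IT_unit j) *m p)).
  rewrite mulmxDr !mulmxA -hi Itil_loop; last by rewrite lj tl.
  by rewrite mulmx0 !mul0mx la !mul0mx addr0.
by rewrite -eW subrK.
Qed.

End BasisModules.

Section Lemma2p2.
Variables (F : closedFieldType) (V Arr : finType) (s t : Arr -> V).
Local Notation P i := (Ptil F s t i).
Local Notation I i := (Itil F s t i).
Local Notation S i := (@Simple F V Arr i).

Lemma Ext1_Ptil_Ptil i j : i != j ->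
  brick_set (fun b : bool => if b then P i else P j) -> Ext1_zero s t (P i) (P j).
Proof.
move=> ij [_ hom0] E Emod ii p hi hp _ surj _ ker_p.
apply: (Ptil_split Emod hp surj) => l li tl.
apply: (act_eq0_ext Emod hi hp ker_p (mulA_unit_arrow s tl)).
  by apply: Ptil_loop; rewrite li tl.
exact: Ptil_unit_eq0 ij (hom0 true false isT).
Qed.

Lemma Ext1_Ptil_self i : ~ iso (P i) (S i) -> Ext1_zero s t (P i) (P i).
Proof.
move=> /Ptil_nonsimple_arrow[a ai aa] E Emod ii p hi hp inj surj _ ker_p.
exact: Ptil_split Emod hp surj (Ptil_ext_loop_eq0 Emod hi hp inj ker_p ai aa).
Qed.

Lemma Ext1_Ptil_Simple i j : i != j -> Ext1_zero s t (P i) (S j).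
Proof.
move=> ij E Emod ii p hi hp _ surj _ ker_p.
apply: (Ptil_split Emod hp surj) => l li tl.
apply: (act_eq0_ext Emod hi hp ker_p (mulA_unit_arrow s tl)).
  by apply: Ptil_loop; rewrite li tl.
exact: Simple_unit ij.
Qed.

Lemma Ext1_Itil_Itil i j : i != j ->
  brick_set (fun b : bool => if b then I i else I j) -> Ext1_zero s t (I i) (I j).
Proof.
move=> ij [_ hom0] E Emod ii p hi hp inj surj pi ker_p.
have [q [hq qi]] : exists q, is_hom E (I j) q /\ q *m ii = 1%:M.
  apply: (Itil_retraction Emod hi inj) => l lj tl.
  apply: (act_eq0_ext Emod hi hp ker_p (mulA_arrow_unit t lj)).
    exact: Itil_unit_eq0 ij (hom0 true false isT).
  by apply: Itil_loop; rewrite lj tl.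
exact: split_of_retraction hi hp hq qi surj pi ker_p.
Qed.

Lemma Ext1_Itil_self i : ~ iso (I i) (S i) -> Ext1_zero s t (I i) (I i).
Proof.
move=> /Itil_nonsimple_arrow[a ai aa] E Emod ii p hi hp inj surj pi ker_p.
have [q [hq qi]] : exists q, is_hom E (I i) q /\ q *m ii = 1%:M.
  exact: Itil_retraction Emod hi inj (Itil_ext_loop_eq0 Emod hi hp surj ker_p ai aa).
exact: split_of_retraction hi hp hq qi surj pi ker_p.
Qed.

Lemma Ext1_Simple_Itil i j : i != j -> Ext1_zero s t (S i) (I j).
Proof.
move=> ij E Emod ii p hi hp inj surj pi ker_p.
have [q [hq qi]] : exists q, is_hom E (I j) q /\ q *m ii = 1%:M.
  apply: (Itil_retraction Emod hi inj) => l lj tl.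
  apply: (act_eq0_ext Emod hi hp ker_p (mulA_arrow_unit t lj)).
    by apply: Simple_unit; rewrite eq_sym.
  by apply: Itil_loop; rewrite lj tl.
exact: split_of_retraction hi hp hq qi surj pi ker_p.
Qed.

End Lemma2p2.

Unset Implicit Arguments.
Theorem lemma2p2 (F : closedFieldType) (V Arr : finType) (s t : Arr -> V) :
  [/\ (forall i j : V, i != j ->
         brick_set (fun b : bool => if b then Ptil F s t i else Ptil F s t j) ->
         Ext1_zero s t (Ptil F s t i) (Ptil F s t j))
    /\ (forall i : V, ~ iso (Ptil F s t i) (Simple F i) ->
         Ext1_zero s t (Ptil F s t i) (Ptil F s t i)),
      (forall i j : V, i != j ->
         brick_set (fun b : bool => if b then Itil F s t i else Itil F s t j) ->
         Ext1_zero s t (Itil F s t i) (Itil F s t j))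
    /\ (forall i : V, ~ iso (Itil F s t i) (Simple F i) ->
         Ext1_zero s t (Itil F s t i) (Itil F s t i)),
      (forall i j : V, i != j -> Ext1_zero s t (Ptil F s t i) (Simple F j))
    & (forall i j : V, i != j -> Ext1_zero s t (Simple F i) (Itil F s t j))].
Proof.
split; [split | split | |].
- exact: Ext1_Ptil_Ptil.
- exact: Ext1_Ptil_self.
- exact: Ext1_Itil_Itil.
- exact: Ext1_Itil_self.
- exact: Ext1_Ptil_Simple.
- exact: Ext1_Simple_Itil.
Qed.
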